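(* Let $k\in\mathbb{Z}$. For every integer $n\ge 1$, $$2\sum_{m=1}^{n}\frac{1}{m^{k-1}}S_{1}(n,m)=G_{n}^{(k)}(1)+G_{n}^{(k)}.$$
   Context: For $k\in\mathbb{Z}$, the polyexponential function of index $k$ is $\mathrm{Ei}_k(x)=\sum_{n=1}^{\infty}\frac{x^n}{n^k(n-1)!}$. The poly-Genocchi polynomials $G_n^{(k)}(x)$ of index $k$ are defined by the generating function $\frac{2\,\mathrm{Ei}_k(\log(1+t))}{e^t+1}e^{xt}=\sum_{n=0}^{\infty}G_n^{(k)}(x)\frac{t^n}{n!}$, and $G_n^{(k)}=G_n^{(k)}(0)$. $S_1(n,m)$ denotes the (signed) Stirling numbers of the first kind, defined by $\frac{(\log(1+t))^m}{m!}=\sum_{n=m}^{\infty}S_1(n,m)\frac{t^n}{n!}$ (equivalently $x(x-1)\cdots(x-n+1)=\sum_{m=0}^{n}S_1(n,m)x^m$). *)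

(* Formal power series over a numFieldType R (char. 0),
   represented by their (ordinary) coefficient sequences nat -> R. *)
From HB Require Import structures.
From mathcomp Require Import all_boot all_order all_algebra.
Set Implicit Arguments. Unset Strict Implicit. Unset Printing Implicit Defensive.
Import Order.TTheory GRing.Theory Num.Theory.
Local Open Scope ring_scope.

Section FPS.
Variable R : numFieldType.

Definition fps := nat -> R.

Definition fps_mul (a b : fps) : fps :=
  fun n => \sum_(i < n.+1) a i * b (n - i)%N.

Definition fps_scale (c : R) (a : fps) : fps := fun n => c * a n.
Definition fps_add (a b : fps) : fps := fun n => a n + b n.

Definition fps_one : fps := fun n => if n == 0%N then 1 else 0.

Fixpoint fps_pow (a : fps) (m : nat) : fps :=
  if m is m'.+1 then fps_mul a (fps_pow a m') else fps_one.

(* composition c(L(t)) = sum_m c_m L(t)^m, meaningful when L 0 = 0 *)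
Definition fps_comp (c L : fps) : fps :=
  fun n => \sum_(m < n.+1) c m * fps_pow L m n.

Fixpoint fps_inv_upto (a : fps) (n : nat) : seq R :=
  if n is n'.+1 then
    let s := fps_inv_upto a n' in
    rcons s (- (a 0%N)^-1 * \sum_(i < n'.+1) a i.+1 * nth 0 s (n' - i)%N)
  else [:: (a 0%N)^-1].

Definition fps_inv (a : fps) : fps := fun n => nth 0 (fps_inv_upto a n) n.

Definition fps_exp (x : R) : fps := fun n => x ^+ n / n`!%:R.

Definition fps_log1p : fps :=
  fun n => if n == 0%N then 0 else (-1) ^+ n.-1 / n%:R.

Definition fps_Ei (k : int) : fps :=
  fun n => if n == 0%N then 0 else ((n%:R : R) ^ k * (n.-1)`!%:R)^-1.

Definition polyGenocchi_gf (k : int) (x : R) : fps :=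
  fps_mul (fps_scale 2 (fps_comp (fps_Ei k) fps_log1p))
    (fps_mul (fps_exp x) (fps_inv (fps_add (fps_exp 1) fps_one))).

Definition polyGenocchi (k : int) (n : nat) (x : R) : R :=
  n`!%:R * polyGenocchi_gf k x n.

End FPS.

Definition stirling1 (n m : nat) : int :=
  (\prod_(i < n) ('X - (i%:Z)%:P) : {poly int})`_m.

(* Since e^{1t} + e^{0t} = e^t + 1, the generating functions of G_n^(k)(1) and
   G_n^(k) add up to 2 Ei_k(log(1+t)), so the right-hand side is
   2 sum_m n! [t^n] log(1+t)^m / (m^k (m-1)!).  Differentiating gives
   (1+t) (log(1+t)^m)' = m log(1+t)^(m-1), i.e. the coefficients of log(1+t)^m
   obey the recurrence of the Stirling numbers of the first kind, whence
   n! [t^n] log(1+t)^m = m! S1(n,m). *)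
From HB Require Import structures.
From mathcomp Require Import all_boot all_order all_algebra.
From mathcomp Require Import ring.

Set Implicit Arguments.
Unset Strict Implicit.
Unset Printing Implicit Defensive.
Import Order.TTheory GRing.Theory Num.Theory.
Local Open Scope ring_scope.

Section FormalPowerSeries.
Variable R : numFieldType.
Implicit Types a b c : fps R.

Lemma eq_fps_mul a a' b b' :
  a =1 a' -> b =1 b' -> fps_mul a b =1 fps_mul a' b'.
Proof. by move=> ea eb n; apply: eq_bigr => i _; rewrite ea eb. Qed.

Lemma fps_mulDl a b c :
  fps_mul (fps_add a b) c =1 fps_add (fps_mul a c) (fps_mul b c).
Proof.
by move=> n; rewrite /fps_add /fps_mul -big_split; apply: eq_bigr => i _; rewrite mulrDl.
Qed.

Lemma fps_mulDr a b c :
  fps_mul a (fps_add b c) =1 fps_add (fps_mul a b) (fps_mul a c).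
Proof.
by move=> n; rewrite /fps_add /fps_mul -big_split; apply: eq_bigr => i _; rewrite mulrDr.
Qed.

Lemma fps_mulrZ a (x : R) b :
  fps_mul a (fps_scale x b) =1 fps_scale x (fps_mul a b).
Proof.
by move=> n; rewrite /fps_scale /fps_mul mulr_sumr; apply: eq_bigr => i _; rewrite mulrCA.
Qed.

Lemma fps_mul1r a : fps_mul (fps_one R) a =1 a.
Proof.
move=> n; rewrite /fps_mul big_ord_recl subn0 /fps_one eqxx mul1r.
by rewrite big1 ?addr0 // => i _; rewrite mul0r.
Qed.

Lemma fps_mulr1 a : fps_mul a (fps_one R) =1 a.
Proof.
move=> n; rewrite /fps_mul big_ord_recr /= subnn /fps_one eqxx mulr1.
by rewrite big1 ?add0r // => i _; rewrite subn_eq0 leqNgt ltn_ord mulr0.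
Qed.

Lemma size_fps_inv_upto a n : size (fps_inv_upto a n) = n.+1.
Proof. by elim: n => //= n IHn; rewrite size_rcons IHn. Qed.

Lemma nth_fps_inv_upto a n i : (i <= n)%N -> nth 0 (fps_inv_upto a n) i = fps_inv a i.
Proof.
move=> /subnK <-; elim: (n - i)%N => [|j IHj]; first by [].
by rewrite addSn /= nth_rcons size_fps_inv_upto ltnS leq_addl IHj.
Qed.

Lemma fps_invS a n :
  fps_inv a n.+1 = - (a 0%N)^-1 * \sum_(i < n.+1) a i.+1 * fps_inv a (n - i)%N.
Proof.
rewrite /fps_inv /= nth_rcons size_fps_inv_upto ltnn eqxx.
by congr (_ * _); apply: eq_bigr => i _; rewrite nth_fps_inv_upto ?leq_subr.
Qed.

Lemma fps_mulrV a : a 0%N != 0 -> fps_mul a (fps_inv a) =1 fps_one R.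
Proof.
move=> a0_neq0 [|n]; first by rewrite /fps_mul big_ord1 mulfV.
rewrite /fps_mul big_ord_recl subn0 fps_invS mulrA mulrN mulfV // mulN1r.
by rewrite addrC subrr.
Qed.

Definition fps_derive a : fps R := fun n => n.+1%:R * a n.+1.
Definition fps_mulX a : fps R := fun n => if n is n'.+1 then a n' else 0.
Definition fps_mul1X a : fps R := fps_add a (fps_mulX a).

Lemma fps_derive_mul a b :
  fps_derive (fps_mul a b) =1
  fps_add (fps_mul (fps_derive a) b) (fps_mul a (fps_derive b)).
Proof.
move=> n; rewrite /fps_add /fps_derive /fps_mul mulr_sumr.
rewrite (eq_bigr (fun i : 'I_n.+2 => i%:R * a i * b (n.+1 - i)%N
                   + a i * ((n.+1 - i)%N%:R * b (n.+1 - i)%N))); last first.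
  by move=> i _; rewrite -{1}(subnKC (ltnSE (ltn_ord i))) natrD; ring.
rewrite big_split /=; congr (_ + _).
  rewrite big_ord_recl mul0r mul0r add0r.
  by apply: eq_bigr => i _; rewrite subSS.
rewrite big_ord_recr /= subnn mul0r mulr0 addr0.
by apply: eq_bigr => i _; rewrite subSn // -ltnS.
Qed.

Lemma fps_mulXl a b : fps_mul (fps_mulX a) b =1 fps_mulX (fps_mul a b).
Proof.
case=> [|n]; first by rewrite /fps_mul big_ord1 mul0r.
rewrite /fps_mul big_ord_recl mul0r add0r.
by apply: eq_bigr => i _; rewrite subSS.
Qed.

Lemma fps_mulXr a b : fps_mul a (fps_mulX b) =1 fps_mulX (fps_mul a b).
Proof.
case=> [|n]; first by rewrite /fps_mul big_ord1 mulr0.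
rewrite /fps_mul big_ord_recr /= subnn mulr0 addr0.
by apply: eq_bigr => i _; rewrite subSn // -ltnS.
Qed.

Lemma fps_mul1Xl a b : fps_mul (fps_mul1X a) b =1 fps_mul1X (fps_mul a b).
Proof. by move=> n; rewrite fps_mulDl /fps_mul1X /fps_add fps_mulXl. Qed.

Lemma fps_mul1Xr a b : fps_mul a (fps_mul1X b) =1 fps_mul1X (fps_mul a b).
Proof. by move=> n; rewrite fps_mulDr /fps_mul1X /fps_add fps_mulXr. Qed.

Lemma fps_mul1XD a b :
  fps_mul1X (fps_add a b) =1 fps_add (fps_mul1X a) (fps_mul1X b).
Proof. by rewrite /fps_mul1X /fps_add /fps_mulX => -[|n]; rewrite ?addr0; ring. Qed.

Lemma eq_fps_mul1X a b : a =1 b -> fps_mul1X a =1 fps_mul1X b.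
Proof. by rewrite /fps_mul1X /fps_add /fps_mulX => eab [|n]; rewrite !eab. Qed.

Local Notation L := (fps_log1p R).

Lemma fps_mul1X_derive_log1p : fps_mul1X (fps_derive L) =1 fps_one R.
Proof.
have derive_log1p j : fps_derive L j = (-1) ^+ j.
  by rewrite /fps_derive /fps_log1p mulrC mulfVK // pnatr_eq0.
by rewrite /fps_mul1X /fps_add /fps_mulX /fps_one => -[|n];
  rewrite !derive_log1p ?addr0 // exprS mulN1r addNr.
Qed.

Lemma fps_mul1X_derive_pow_log1p m :
  fps_mul1X (fps_derive (fps_pow L m)) =1 fps_scale m%:R (fps_pow L m.-1).
Proof.
elim: m => [|m IHm] n.
  by rewrite /fps_mul1X /fps_add /fps_mulX /fps_derive /fps_scale /fps_one;
    case: n => [|n]; rewrite ?mulr0 ?addr0 ?mul0r.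
rewrite /= (eq_fps_mul1X (fps_derive_mul _ _)) fps_mul1XD /fps_add.
rewrite -fps_mul1Xl -fps_mul1Xr (eq_fps_mul fps_mul1X_derive_log1p (frefl _)).
rewrite (eq_fps_mul (frefl _) IHm).
rewrite fps_mul1r fps_mulrZ /fps_scale.
case: m {IHm} => [|m]; first by rewrite mul0r addr0 mul1r.
by rewrite /= [m.+2%:R]mulrSr mulrDl mul1r addrC.
Qed.

Lemma coef_pow_log1pS m n :
  n.+1%:R * fps_pow L m n.+1 = m%:R * fps_pow L m.-1 n - n%:R * fps_pow L m n.
Proof.
apply/eqP; rewrite eq_sym subr_eq; apply/eqP.
rewrite -[LHS]/(fps_scale m%:R (fps_pow L m.-1) n) -fps_mul1X_derive_pow_log1p.
by case: n => [|n]; rewrite /fps_mul1X /fps_add /fps_mulX /fps_derive ?mul0r.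
Qed.

Lemma coef0_pow_log1p m : fps_pow L m 0%N = (m == 0%N)%:R.
Proof. by case: m => [|m] //=; rewrite /fps_mul big_ord1 /fps_log1p mul0r. Qed.

Lemma fps_exp0 : fps_exp (0 : R) =1 fps_one R.
Proof.
by rewrite /fps_exp /fps_one => -[|j] /=; rewrite ?expr0 ?divr1 // expr0n mul0r.
Qed.

End FormalPowerSeries.

Lemma stirling1_0 m : stirling1 0 m = (m == 0%N)%:R.
Proof. by rewrite /stirling1 big_ord0 coef1. Qed.

Lemma stirling1S0 n : stirling1 n.+1 0 = 0.
Proof. by rewrite /stirling1 big_ord_recl subr0 coefXM. Qed.

Lemma stirling1SS n m :
  stirling1 n.+1 m.+1 = stirling1 n m - n%:Z * stirling1 n m.+1.
Proof. by rewrite /stirling1 big_ord_recr /= mulrBr coefB coefMX coefMC mulrC. Qed.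

Lemma fact_coef_pow_log1p (R : numFieldType) n m :
  n`!%:R * fps_pow (fps_log1p R) m n = m`!%:R * (stirling1 n m)%:~R.
Proof.
elim: n m => [|n IHn] m.
  by rewrite coef0_pow_log1p stirling1_0 mul1r; case: m => [|m]; rewrite ?mul1r ?mulr0.
case: m => [|m]; first by rewrite stirling1S0 mulr0 /= /fps_one mulr0.
rewrite factS natrM mulrAC coef_pow_log1pS mulrBl -!mulrA ![_ * n`!%:R]mulrC !IHn.
by rewrite stirling1SS factS natrM rmorphB rmorphM /=; ring.
Qed.

Lemma fact_mul_fps_Ei (R : numFieldType) k m : (0 < m)%N ->
  fps_Ei R k m * m`!%:R = ((m%:R : R) ^ (k - 1))^-1.
Proof.
case: m => [|m] // _; rewrite /fps_Ei factS natrM /=.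
have m1_neq0 : (m.+1%:R : R) != 0 by rewrite pnatr_eq0.
have -> : (m.+1%:R : R) ^ k = m.+1%:R ^ (k - 1) * m.+1%:R.
  by rewrite -{1}(subrK 1 k) expfzDr // expr1z.
rewrite !invfM mulrACA mulVf ?pnatr_eq0 -?lt0n ?fact_gt0 // mulr1.
by rewrite -mulrA mulVf // mulr1.
Qed.

Lemma fact_coef_Ei_log1p (R : numFieldType) k n :
  n`!%:R * fps_comp (fps_Ei R k) (fps_log1p R) n
  = \sum_(1 <= m < n.+1) ((m%:R : R) ^ (k - 1))^-1 * (stirling1 n m)%:~R.
Proof.
rewrite /fps_comp big_ord_recl {1}/fps_Ei /= mul0r add0r mulr_sumr.
rewrite big_add1 /= big_mkord; apply: eq_bigr => i _.
rewrite /bump add0n -[fps_mul _ _ n]/(fps_pow (fps_log1p R) i.+1 n).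
by rewrite mulrCA fact_coef_pow_log1p mulrA fact_mul_fps_Ei.
Qed.

Lemma polyGenocchi_gf1D0 (R : numFieldType) k :
  fps_add (polyGenocchi_gf k (1 : R)) (polyGenocchi_gf k 0)
  =1 fps_scale 2 (fps_comp (fps_Ei R k) (fps_log1p R)).
Proof.
set D := fps_add (fps_exp 1) (fps_one R).
have D0_neq0 : D 0%N != 0.
  by rewrite /D /fps_add /fps_exp /fps_one /= expr0 divr1 (pnatr_eq0 R 2).
have exp_sum_inv : fps_add (fps_mul (fps_exp 1) (fps_inv D))
                           (fps_mul (fps_exp 0) (fps_inv D)) =1 fps_one R.
  move=> j; rewrite -fps_mulDl -(fps_mulrV D0_neq0 j).
  by apply: eq_fps_mul => // i; rewrite /D /fps_add fps_exp0.
by move=> n; rewrite -fps_mulDr (eq_fps_mul (frefl _) exp_sum_inv) fps_mulr1.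
Qed.

Theorem theorem1 (R : numFieldType) (k : int) (n : nat) (hn : (1 <= n)%N) :
  2 * \sum_(1 <= m < n.+1) ((m%:R : R) ^ (k - 1))^-1 * (stirling1 n m)%:~R
  = polyGenocchi k n (1 : R) + polyGenocchi k n (0 : R).
Proof.
rewrite /polyGenocchi -mulrDr -[polyGenocchi_gf _ _ _ + _]/(fps_add _ _ n).
by rewrite polyGenocchi_gf1D0 /fps_scale mulrCA fact_coef_Ei_log1p.
Qed.
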